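(* Let $L$ be a linear forest with $k$ vertices and let $P_n$ be the path with vertices $w_1,\dots,w_n$ in order. For an index $h$, let $s'_h(P_n,L)$ be the number of vertex subsets $X\subseteq V(P_n)$ with $w_h\in X$ such that $P_n[X]$ is isomorphic to $L$ and $w_h$ is an isolated vertex of $P_n[X]$. Then $s'_h(P_n,L)$ has the same value for all $h$ with $k\le h\le n-k+1$.
   Context: A linear forest is a disjoint union of paths; $P_n[X]$ denotes the subgraph of $P_n$ induced by $X$. *)

From mathcomp Require Import all_boot.
Set Implicit Arguments. Unset Strict Implicit. Unset Printing Implicit Defensive.

(* Adjacency in the path P_n on vertices 'I_n (vertex w_h is the ordinal h-1). *)
Definition path_adj (i j : nat) : bool := (i.+1 == j) || (j.+1 == i).

(* A simple graph on a finite type T is a symmetric relation e; it is a linear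
   forest (disjoint union of paths) iff its vertices can be placed injectively
   on the integer line so that every edge joins two consecutive integers, i.e.
   it is a (not necessarily spanning-connected) subgraph of a path obtained by
   deleting edges. *)
Definition linear_forest (T : finType) (e : rel T) : Prop :=
  exists f : T -> nat, injective f /\
    forall u v, e u v -> path_adj (f u) (f v).

Definition induced_iso (n : nat) (X : {set 'I_n}) (T : finType) (e : rel T) : bool :=
  [exists g : {ffun T -> 'I_n},
     [&& injectiveb g, (g @: [set: T]) == X &
        [forall u, forall v, e u v == path_adj (g u) (g v)]]].

Definition wv (h : nat) : nat := h.-1.

Definition s_prime (n h : nat) (T : finType) (e : rel T) : nat :=
  #|[set X : {set 'I_n} |
      [&& [exists x in X, val x == wv h],
          [forall x in X, ~~ path_adj (wv h) (val x)] &
          induced_iso X e]]|.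

From mathcomp Require Import all_boot zify.
Set Implicit Arguments. Unset Strict Implicit. Unset Printing Implicit Defensive.

(* Index the vertices of P_n from 0, so that w_h is vertex h - 1.  Since both
   neighbours of w_h are excluded, relabelling the path so that w_h becomes its
   last vertex and the gap left by its neighbours closes up gives
   s'_h = A - c (h - 2), where F is the family of vertex sets Z of P_(n-2) such
   that P_n[Z + {w_n}] is isomorphic to L, A = |F|, and c i is the number of
   members of F containing vertex i.  The family F is closed under isomorphism of
   induced subgraphs and its members have k - 1 vertices, so it suffices that for
   any such family of s-sets on P_m, c i is constant for s - 1 <= i <= m - s.
   This goes by induction on m: a shift and a reflection give
   c (j + 1) - c j = d (m - j - 2) - d j, where d i counts the members containing
   i and the last vertex; classifying these by the vertex p missing just before
   their final run writes d i as a sum over p of the counts c of the families on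
   the shorter paths P_p obtained by fixing that run, which do not depend on i by
   induction. *)

Lemma card_in_bij (T1 T2 : finType) (A : {set T1}) (B : {set T2})
    (F : T1 -> T2) (G : T2 -> T1) :
  {in A, forall x, F x \in B} -> {in B, forall y, G y \in A} ->
  {in A, cancel F G} -> {in B, cancel G F} -> #|A| = #|B|.
Proof.
move=> FA GB FK GK; have -> : B = F @: A.
  apply/setP => y; apply/idP/imsetP => [yB|[x xA ->]]; last exact: FA.
  by exists (G y); rewrite ?GB ?GK.
by rewrite card_in_imset //; exact: can_in_inj FK.
Qed.

Lemma const_of_succ (c : nat -> nat) a b :
  (forall j, a <= j -> j < b -> c j = c j.+1) ->
  forall i1 i2, a <= i1 <= b -> a <= i2 <= b -> c i1 = c i2.
Proof.
move=> step; have from_a d : a + d <= b -> c (a + d) = c a.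
  elim: d => [|d IH] hd; first by rewrite addn0.
  by rewrite addnS -step ?IH //; lia.
have to_a i : a <= i <= b -> c i = c a.
  by move=> hi; rewrite -(subnKC (_ : a <= i)) ?from_a //; lia.
by move=> i1 i2 /to_a -> /to_a ->.
Qed.

Section PathSubsets.

Variable N : nat.
Implicit Types (X Y Z R : {set 'I_N}) (D W : pred nat) (Q P : {set 'I_N} -> bool).

(* Vertex sets of P_N are sets of ordinals while index arithmetic is done in
   [nat]; [relabel f] silently drops the images that are not below [N]. *)
Definition memn Y (i : nat) : bool := [exists y in Y, y == i :> nat].

Definition within D Y : bool := [forall y in Y, D y].

Definition relabel (f : nat -> nat) Y : {set 'I_N} :=
  [set z : 'I_N | [exists y in Y, f y == z :> nat]].

Definition segment (a b : nat) : {set 'I_N} := [set y : 'I_N | a <= y < b].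

Definition path_iso X Y : Prop := exists f : nat -> nat,
  [/\ {in X, forall x : 'I_N, memn Y (f x)},
      {in Y, forall y : 'I_N, exists2 x : 'I_N, x \in X & f x = y},
      {in X &, injective (fun x : 'I_N => f x)} &
      {in X &, forall x y : 'I_N, path_adj (f x) (f y) = path_adj x y}].

Definition iso_closed W Q : Prop :=
  forall X Y, within W X -> within W Y -> path_iso X Y -> Q X -> Q Y.

Definition count_sets D Q P : nat := #|[set Y | [&& within D Y, Q Y & P Y]]|.

Lemma memnP Y i : reflect (exists2 y, y \in Y & y = i :> nat) (memn Y i).
Proof. by apply: (iffP exists_inP) => -[y yY /eqP]; exists y. Qed.

Lemma withinP D Y : reflect {in Y, forall y : 'I_N, D y} (within D Y).
Proof. exact: forall_inP. Qed.

Lemma eq_within D D' Y : D =1 D' -> within D Y = within D' Y.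
Proof. by move=> eqD; apply: eq_forallb => y; rewrite eqD. Qed.

Lemma sub_within D D' Y : (forall x, D x -> D' x) -> within D Y -> within D' Y.
Proof. by move=> sD /withinP YD; apply/withinP => y /YD /sD. Qed.

Lemma within_neq D Y a :
  within (fun x => D x && (x != a)) Y = within D Y && ~~ memn Y a.
Proof.
apply/withinP/andP => [YD|[/withinP YD Ya] y yY].
  split; first by apply/withinP => y /YD /andP[].
  by apply/memnP => -[y yY ya]; move: (YD y yY); rewrite ya eqxx andbF.
rewrite YD //=; apply/eqP => ya; case/memnP: Ya; by exists y.
Qed.

Lemma withinU D X Y : within D (X :|: Y) = within D X && within D Y.
Proof.
apply/withinP/andP => [XYD|[/withinP XD /withinP YD] y]; last first.
  by rewrite inE => /orP[/XD|/YD].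
by split; apply/withinP => y yXY; apply: XYD; rewrite inE yXY ?orbT.
Qed.

Lemma within_relabel D D' f Y :
  within D Y -> (forall x, D x -> D' (f x)) -> within D' (relabel f Y).
Proof.
move=> /withinP YD fD; apply/withinP => z.
by rewrite inE => /exists_inP[y yY /eqP <-]; apply/fD/YD.
Qed.

Section Relabel.

Variables (D : pred nat) (f : nat -> nat) (Y : {set 'I_N}).
Hypotheses (YD : within D Y) (fN : forall x, D x -> f x < N)
           (f_inj : forall x y, D x -> D y -> f x = f y -> x = y).

Lemma memn_relabel a b : D a -> f a = b -> memn (relabel f Y) b = memn Y a.
Proof.
move/withinP: YD => YD' Da <-; apply/memnP/memnP => [[z]|[y yY <-]].
  rewrite inE => /exists_inP[y yY /eqP <-] fya; exists y => //.
  by apply: f_inj; rewrite ?YD'.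
exists (Ordinal (fN (YD' y yY))) => //.
by rewrite inE; apply/exists_inP; exists y.
Qed.

Lemma relabelK g : (forall x, D x -> g (f x) = x) -> relabel g (relabel f Y) = Y.
Proof.
move/withinP: YD => YD' fK; apply/setP => z; rewrite inE; apply/idP/idP.
  case/exists_inP => _ /[!inE] /exists_inP[y yY /eqP <-] /eqP.
  by rewrite fK ?YD' // => /val_inj <-.
move=> zY; apply/exists_inP; exists (Ordinal (fN (YD' z zY))); last by rewrite /= fK ?YD'.
by rewrite inE; apply/exists_inP; exists z.
Qed.

Lemma relabel_path_iso :
  (forall x y, D x -> D y -> path_adj (f x) (f y) = path_adj x y) ->
  path_iso Y (relabel f Y).
Proof.
move/withinP: YD => YD' f_adj; exists f; split.
- by move=> y yY; rewrite (memn_relabel (YD' y yY)) //; apply/memnP; exists y.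
- by move=> z /[!inE] /exists_inP[y yY /eqP]; exists y.
- by move=> x y xY yY /f_inj fxy; apply/val_inj/fxy; apply: YD'.
- by move=> x y xY yY; apply: f_adj; apply: YD'.
Qed.

End Relabel.

Lemma count_sets_split D Q P (b : {set 'I_N} -> bool) :
  count_sets D Q P =
  count_sets D Q (fun Y => P Y && b Y) + count_sets D Q (fun Y => P Y && ~~ b Y).
Proof.
rewrite /count_sets -(cardsID [set Y | b Y]); congr (_ + _); apply: eq_card => Y;
  by rewrite !inE; case: (within D Y); case: (Q Y); case: (P Y); case: (b Y).
Qed.

Lemma count_sets_negb D Q P :
  count_sets D Q (fun Y => ~~ P Y) = count_sets D Q predT - count_sets D Q P.
Proof. by rewrite (count_sets_split D Q predT P) addKn. Qed.

Lemma eq_count_sets D D' Q P P' :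
  (forall Y, Q Y -> within D Y && P Y = within D' Y && P' Y) ->
  count_sets D Q P = count_sets D' Q P'.
Proof.
move=> eqDP; apply: eq_card => Y; rewrite !inE andbCA [_ && (Q Y && _)]andbCA.
by case QY: (Q Y) => //=; apply: eqDP.
Qed.

Lemma count_sets_neq D Q P a :
  count_sets (fun x => D x && (x != a)) Q P =
  count_sets D Q (fun Y => P Y && ~~ memn Y a).
Proof.
apply: eq_count_sets => Y _.
by rewrite within_neq -andbA [~~ _ && _]andbC andbA.
Qed.

Lemma count_sets_relabel W D1 D2 f g Q P1 P2 :
  iso_closed W Q -> (forall x, W x -> x < N) ->
  (forall x, D1 x -> W x) -> (forall y, D2 y -> W y) ->
  (forall x, D1 x -> D2 (f x)) -> (forall y, D2 y -> D1 (g y)) ->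
  (forall x, D1 x -> g (f x) = x) -> (forall y, D2 y -> f (g y) = y) ->
  (forall x y, D1 x -> D1 y -> path_adj (f x) (f y) = path_adj x y) ->
  (forall Y, within D1 Y -> P2 (relabel f Y) = P1 Y) ->
  count_sets D1 Q P1 = count_sets D2 Q P2.
Proof.
move=> Qiso WN D1W D2W fD gD fK gK f_adj eqP12.
have fN x : D1 x -> f x < N by move=> /fD /D2W /WN.
have gN y : D2 y -> g y < N by move=> /gD /D1W /WN.
have f_inj x y : D1 x -> D1 y -> f x = f y -> x = y.
  by move=> Dx Dy fxy; rewrite -(fK x) // -(fK y) // fxy.
have g_inj x y : D2 x -> D2 y -> g x = g y -> x = y.
  by move=> Dx Dy gxy; rewrite -(gK x) // -(gK y) // gxy.
have g_adj x y : D2 x -> D2 y -> path_adj (g x) (g y) = path_adj x y.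
  by move=> Dx Dy; rewrite -f_adj ?gD // !gK.
apply: (card_in_bij (F := relabel f) (G := relabel g)) => Y /[!inE] /and3P[YD QY PY].
- have fYD := within_relabel YD fD.
  rewrite fYD eqP12 // PY andbT /=.
  apply: Qiso QY; [exact: sub_within YD | exact: sub_within fYD |].
  exact: relabel_path_iso YD fN f_inj f_adj.
- have gYD := within_relabel YD gD.
  rewrite gYD -eqP12 // (relabelK YD gN gK) PY andbT /=.
  apply: Qiso QY; [exact: sub_within YD | exact: sub_within gYD |].
  exact: relabel_path_iso YD gN g_inj g_adj.
- exact: (relabelK YD fN fK).
- exact: (relabelK YD gN gK).
Qed.

Lemma card_segment a b : b <= N -> #|segment a b| = b - a.
Proof.
elim: b => [|b IH] bN.
  by apply/eqP; rewrite cards_eq0; apply/eqP/setP => y; rewrite !inE ltn0 andbF.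
case: (leqP a b) => ab; last first.
  suff -> : segment a b.+1 = set0 by rewrite cards0; lia.
  by apply/setP => y; rewrite !inE; apply/idP/idP; lia.
have -> : segment a b.+1 = Ordinal bN |: segment a b.
  by apply/setP => y; rewrite !inE -val_eqE /=; apply/idP/idP; lia.
by rewrite cardsU1 IH ?(ltnW bN) // !inE /= ltnn andbF /=; lia.
Qed.

Lemma sub_segment1 Y a : a < N -> (segment a a.+1 \subset Y) = memn Y a.
Proof.
move=> aN; apply/subsetP/memnP => [aY|[y yY ya] z].
  by exists (Ordinal aN) => //; apply: aY; rewrite inE /=; lia.
by rewrite inE => za; have -> : z = y by apply/val_inj; rewrite /= ya; lia.
Qed.

Lemma sub_segmentS Y a b : a < b -> b <= N ->
  (segment a.+1 b \subset Y) && memn Y a = (segment a b \subset Y).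
Proof.
move=> ab bN; apply/andP/subsetP => [[/subsetP sY /memnP[y yY ya]] z|sY].
  rewrite inE => /andP[az zb]; case: (ltngtP a z) => [a_z||za].
  - by apply: sY; rewrite inE a_z.
  - lia.
  - by have -> : z = y by apply/val_inj; rewrite /= ya.
split; first by apply/subsetP => z /[!inE] z_ab; apply: sY; rewrite inE; lia.
by rewrite -sub_segment1; [apply/subsetP => z /[!inE] za; apply: sY; rewrite inE|]; lia.
Qed.

Lemma memn_setI_segment Y a p : a < p -> memn (Y :&: segment 0 p) a = memn Y a.
Proof.
move=> ap; apply/memnP/memnP => -[y yY ya]; exists y => //.
  by move: yY; rewrite inE => /andP[].
by rewrite !inE yY /=; lia.
Qed.

Lemma card_setU_segment Z a b : within (fun x => x < a) Z -> b <= N ->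
  #|Z :|: segment a b| = #|Z| + (b - a).
Proof.
move=> /withinP Za bN; rewrite cardsU card_segment //.
suff -> : Z :&: segment a b = set0 by rewrite cards0 subn0.
by apply/setP => y; rewrite !inE; apply/negbTE/andP => -[/Za]; lia.
Qed.

(* The gap at [p] keeps [R] non-adjacent to both [X] and [Y], so the
   isomorphism extends by the identity on [R]. *)
Lemma path_iso_setU p X Y R :
  within (fun x => x < p) X -> within (fun x => x < p) Y ->
  within (fun x => p < x) R -> path_iso X Y -> path_iso (X :|: R) (Y :|: R).
Proof.
move=> /withinP Xp /withinP Yp /withinP Rp [f [fXY fYX f_inj f_adj]].
have fXp x : x \in X -> f x < p by move=> /fXY /memnP[y /Yp yp <-].
pose g x := if x < p then f x else x.
have gX x : x \in X -> g x = f x by move=> /Xp xp; rewrite /g xp.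
have gR x : x \in R -> g x = x by move=> /Rp px; rewrite /g ltnNge ltnW.
exists g; split.
- move=> x /[!inE] /orP[xX|xR]; apply/memnP; last by exists x; rewrite ?gR ?inE ?xR ?orbT.
  by case/memnP: (fXY x xX) => y yY fxy; exists y; rewrite ?gX ?inE ?yY.
- move=> y /[!inE] /orP[yY|yR]; last by exists y; rewrite ?gR ?inE ?yR ?orbT.
  by case: (fYX y yY) => x xX fxy; exists x; rewrite ?gX ?inE ?xX.
- move=> x y /[!inE] /orP[xX|xR] /orP[yX|yR].
  + by rewrite !gX //; apply: f_inj.
  + by rewrite gX ?gR //; have := fXp x xX; have := Rp y yR; lia.
  + by rewrite gR ?gX //; have := fXp y yX; have := Rp x xR; lia.
  + by rewrite !gR //; apply: val_inj.
- move=> x y /[!inE] /orP[xX|xR] /orP[yX|yR].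
  + by rewrite !gX //; apply: f_adj.
  + rewrite gX ?gR //; have := Xp x xX; have := fXp x xX; have := Rp y yR.
    by rewrite /path_adj; lia.
  + rewrite gR ?gX //; have := Xp y yX; have := fXp y yX; have := Rp x xR.
    by rewrite /path_adj; lia.
  + by rewrite !gR.
Qed.

Lemma iso_closed_setU W p Q R :
  (forall x, x < p -> W x) -> within W R -> within (fun x => p < x) R ->
  iso_closed W Q -> iso_closed (fun x => x < p) (fun Z => Q (Z :|: R)).
Proof.
move=> pW RW Rp Qiso X Y Xp Yp XY; apply: Qiso; rewrite ?withinU ?RW ?andbT.
- exact: sub_within Xp.
- exact: sub_within Yp.
- exact: path_iso_setU Xp Yp Rp XY.
Qed.

Lemma count_sets_restrict m p Q P : p < m -> m <= N ->
  (forall Y, P (Y :&: segment 0 p) = P Y) ->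
  count_sets (fun x => x < m) Q
    (fun Y => [&& P Y, segment p.+1 m \subset Y & ~~ memn Y p]) =
  count_sets (fun x => x < p) (fun Z => Q (Z :|: segment p.+1 m)) P.
Proof.
move=> pm mN PI.
have tailK Y : within (fun x => x < m) Y -> segment p.+1 m \subset Y -> ~~ memn Y p ->
    (Y :&: segment 0 p) :|: segment p.+1 m = Y.
  move=> /withinP Ym /subsetP tailY pY; apply/setP => y; rewrite !inE.
  apply/idP/idP => [/orP[/andP[] //|y_tail]|yY]; first by apply: tailY; rewrite inE.
  have := Ym y yY; case: (ltngtP y p) => yp ym; rewrite ?yY ?yp ?ym //=.
  by case/memnP: pY; exists y.
have headK Z : within (fun x => x < p) Z -> (Z :|: segment p.+1 m) :&: segment 0 p = Z.
  move=> /withinP Zp; apply/setP => y; rewrite !inE.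
  by case yZ: (y \in Z) => /=; [have := Zp y yZ|]; lia.
apply: (card_in_bij (F := fun Y => Y :&: segment 0 p)
                    (G := fun Z => Z :|: segment p.+1 m)) => Y /[!inE].
- case/and3P => Ym QY /and3P[PY tailY pY]; rewrite -(tailK Y) // in QY.
  rewrite QY PI PY andbT /= andbT.
  by apply/withinP => y /[!inE] /andP[_ /andP[_ ->]].
- case/and3P => Zp QZ PZ; rewrite QZ -PI headK // PZ subsetUr /=.
  rewrite withinU (sub_within _ Zp); last by move=> x; lia.
  apply/andP; split; first by apply/withinP => y /[!inE] /andP[_ ->].
  by apply/memnP => -[y /[!inE] /orP[/(withinP _ _ Zp)|] yp]; lia.
- by case/and3P => Ym _ /and3P[_ tailY pY]; apply: tailK.
- by case/and3P => Zp _ _; apply: headK.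
Qed.

End PathSubsets.

Arguments memn {N} Y i.

Section CountMembers.

Variables (N m : nat) (Q : {set 'I_N} -> bool).
Hypotheses (mN : m <= N) (Qiso : iso_closed (fun x => x < m) Q).

Local Notation cnt := (count_sets (fun x => x < m) Q).

Lemma count_mem_card0 (i : nat) :
  (forall Y, within (fun x => x < m) Y -> Q Y -> #|Y| = 0) -> cnt (memn^~ i) = 0.
Proof.
move=> Y0; apply/eqP; rewrite cards_eq0; apply/eqP/setP => Y; rewrite !inE.
apply/negbTE/and3P => -[Ym QY /memnP[y yY _]].
by move/eqP: (Y0 Y Ym QY); rewrite cards_eq0 => /eqP Y_0; rewrite Y_0 inE in yY.
Qed.

(* Split the members containing [j] by membership of [m.-1] and those
   containing [j.+1] by membership of [0]: the shift [x |-> x.+1] matches the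
   two parts avoiding these vertices, and the reflection [x |-> m.-1 - x] maps
   the members containing [j.+1] and [0] to those containing [m - j.+2] and
   [m.-1]. *)
Lemma count_mem_succ (j : nat) : j.+2 <= m ->
  cnt (memn^~ j.+1) + cnt (fun Y => memn Y j && memn Y m.-1) =
  cnt (memn^~ j) + cnt (fun Y => memn Y (m - j.+2) && memn Y m.-1).
Proof.
move=> jm.
have reflection : cnt (fun Y => memn Y j.+1 && memn Y 0) =
                  cnt (fun Y => memn Y (m - j.+2) && memn Y m.-1).
  apply: (count_sets_relabel (f := fun x => m.-1 - x) (g := fun x => m.-1 - x) Qiso);
    try by move=> *; lia.
  - by move=> x y xm ym; rewrite /path_adj; lia.
  move=> Y Ym; rewrite (memn_relabel Ym _ _ (_ : j.+1 < m)) //;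
    rewrite ?(memn_relabel Ym _ _ (_ : 0 < m)) //; by move=> *; lia.
have shift : cnt (fun Y => memn Y j && ~~ memn Y m.-1) =
             cnt (fun Y => memn Y j.+1 && ~~ memn Y 0).
  rewrite -!count_sets_neq.
  apply: (count_sets_relabel (f := S) (g := predn) Qiso); try by move=> *; lia.
  - by move=> x y xm ym; rewrite /path_adj; lia.
  move=> Y Ym; apply: (memn_relabel Ym); by move=> *; lia.
rewrite (count_sets_split _ _ (memn^~ j) (memn^~ m.-1)).
rewrite (count_sets_split _ _ (memn^~ j.+1) (memn^~ 0)) reflection shift; lia.
Qed.

Lemma count_tail_telescope (i a b : nat) : a <= b <= m ->
  cnt (fun Y => memn Y i && (segment N b m \subset Y)) =
  \sum_(a <= p < b)
     cnt (fun Y => [&& memn Y i, segment N p.+1 m \subset Y & ~~ memn Y p]) +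
  cnt (fun Y => memn Y i && (segment N a m \subset Y)).
Proof.
elim: b => [|b IH] /andP[ab bm].
  by move: ab; rewrite leqn0 => /eqP ->; rewrite big_geq.
case: (ltngtP a b.+1) ab => // [ab _|-> _]; last by rewrite big_geq.
rewrite big_nat_recr //= addnAC -IH; last by lia.
rewrite (count_sets_split _ _ _ (memn^~ b)); congr (_ + _);
  apply: eq_count_sets => Y _; rewrite -andbA //.
by rewrite sub_segmentS //; lia.
Qed.

Lemma count_tail_card (s i : nat) :
  (forall Y, within (fun x => x < m) Y -> Q Y -> #|Y| = s) -> i < m - s ->
  cnt (fun Y => memn Y i && (segment N (m - s) m \subset Y)) = 0.
Proof.
move=> Ys im; apply/eqP; rewrite cards_eq0; apply/eqP/setP => Y; rewrite !inE.
apply/negbTE/and3P => -[Ym QY /andP[/memnP[y yY yi] tailY]].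
have : #|y |: segment N (m - s) m| <= #|Y|.
  by apply/subset_leq_card; rewrite subUset sub1set yY.
have y_tail : (y \in segment N (m - s) m) = false by rewrite inE yi; lia.
by rewrite cardsU1 y_tail card_segment // Ys //=; lia.
Qed.

Lemma count_last_sum (s i : nat) :
  (forall Y, within (fun x => x < m) Y -> Q Y -> #|Y| = s.+1) -> i < m - s.+1 ->
  cnt (fun Y => memn Y i && memn Y m.-1) =
  \sum_(m - s.+1 <= p < m.-1)
     cnt (fun Y => [&& memn Y i, segment N p.+1 m \subset Y & ~~ memn Y p]).
Proof.
move=> Ys im.
have -> : cnt (fun Y => memn Y i && memn Y m.-1) =
          cnt (fun Y => memn Y i && (segment N m.-1 m \subset Y)).
  apply: eq_count_sets => Y _.
  by rewrite -(sub_segment1 Y (a := m.-1)) ?prednK //; lia.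
by rewrite (@count_tail_telescope i (m - s.+1)) ?(count_tail_card Ys) ?addn0 //; lia.
Qed.

End CountMembers.

Lemma count_mem_const N m s (Q : {set 'I_N} -> bool) :
  m <= N -> iso_closed (fun x => x < m) Q ->
  (forall Y, within (fun x => x < m) Y -> Q Y -> #|Y| = s) ->
  forall i1 i2, s <= i1.+1 -> i1 + s <= m -> s <= i2.+1 -> i2 + s <= m ->
  count_sets (fun x => x < m) Q (memn^~ i1) = count_sets (fun x => x < m) Q (memn^~ i2).
Proof.
elim/ltn_ind: m s Q => m IH [|s] Q mN Qiso Ys i1 i2 hi1 hi1' hi2 hi2'.
  by rewrite !count_mem_card0.
have last_const i i' : s <= i -> i + s.+2 <= m -> s <= i' -> i' + s.+2 <= m ->
    count_sets (fun x => x < m) Q (fun Y => memn Y i && memn Y m.-1) =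
    count_sets (fun x => x < m) Q (fun Y => memn Y i' && memn Y m.-1).
  move=> hi hi' hj hj'; rewrite !(count_last_sum mN Ys); try lia.
  apply: eq_big_nat => p /andP[p1 p2].
  have tail_m : within (fun x => x < m) (segment N p.+1 m).
    by apply/withinP => y /[!inE]; lia.
  have tail_p : within (fun x => p < x) (segment N p.+1 m).
    by apply/withinP => y /[!inE]; lia.
  rewrite !count_sets_restrict; try lia;
    try by move=> Y; apply: memn_setI_segment; lia.
  apply: (IH p _ (s.+1 - (m - p.+1))); try lia.
    by apply: iso_closed_setU tail_m tail_p Qiso => x; lia.
  move=> Z Zp QZ; have ZRm : within (fun x => x < m) (Z :|: segment N p.+1 m).
    by rewrite withinU tail_m andbT; apply: sub_within Zp => x; lia.
  have Zp' : within (fun x => x < p.+1) Z by apply: sub_within Zp => x; lia.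
  by have := Ys _ ZRm QZ; rewrite card_setU_segment //; lia.
apply: (const_of_succ (c := fun i => count_sets (fun x => x < m) Q (memn^~ i))
                      (a := s) (b := m - s.+1)); try lia.
move=> j j1 j2; have := count_mem_succ mN Qiso (_ : j.+2 <= m).
by rewrite (last_const j (m - j.+2)); lia.
Qed.

(* The relabelling sends [w] to the last vertex and closes the gap left by
   its two excluded neighbours. *)
Lemma count_isolated_last n w (Q : {set 'I_n} -> bool) :
  iso_closed (fun x => x < n) Q -> 0 < w -> w.+1 < n ->
  count_sets (fun x => [&& x < n, x != w.+1 & x.+1 != w]) Q (memn^~ w) =
  count_sets (fun y => [&& y < n, y != w.-1 & y != n.-2]) Q (memn^~ n.-1).
Proof.
move=> Qiso w0 wn.
pose f x := if x == w then n.-1 else if x < w then x else x - 2.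
pose g y := if y == n.-1 then w else if y < w then y else y.+2.
apply: (count_sets_relabel (f := f) (g := g) Qiso);
  try by move=> *; rewrite /f /g /path_adj; (repeat case: ifP => ? /=); lia.
- move=> x ?; rewrite /f; (repeat case: ifP => ?);
    by rewrite /g; (repeat case: ifP => ? /=); lia.
- move=> y ?; rewrite /g; (repeat case: ifP => ?);
    by rewrite /f; (repeat case: ifP => ? /=); lia.
move=> Y YD /=; apply: (memn_relabel YD); rewrite /f ?eqxx //;
  [move=> x ? | move=> x y ? ? | lia]; (repeat case: ifP => ? /=); lia.
Qed.

Lemma count_last_restrict n w (Q : {set 'I_n} -> bool) : 0 < w -> w.+1 < n ->
  count_sets (fun y => [&& y < n, y != w.-1 & y != n.-2]) Q (memn^~ n.-1) =
  count_sets (fun x => x < n.-2) (fun Z => Q (Z :|: segment n n.-1 n))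
    (fun Z => ~~ memn Z w.-1).
Proof.
move=> w0 wn; have -> : n.-1 = n.-2.+1 by lia.
have head_w Y : ~~ memn (Y :&: segment n 0 n.-2) w.-1 = ~~ memn Y w.-1.
  by rewrite memn_setI_segment //; lia.
rewrite -(count_sets_restrict _ _ _ head_w); try lia.
apply: eq_count_sets => Y _.
rewrite (@eq_within _ _ (fun y => (y < n) && (y != n.-2) && (y != w.-1))); last first.
  by move=> y; lia.
have -> : (segment n n.-2.+1 n \subset Y) = memn Y n.-2.+1.
  by rewrite -sub_segment1 (_ : n.-2.+2 = n) //; lia.
rewrite !within_neq.
by case: (within _ Y); case: (memn Y w.-1); case: (memn Y n.-2); case: (memn Y n.-2.+1).
Qed.

Section InducedSubgraphs.

Variables (T : finType) (e : rel T).

Lemma induced_iso_path_iso n (X Y : {set 'I_n}) :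
  path_iso X Y -> induced_iso X e -> induced_iso Y e.
Proof.
case=> f [fXY fYX f_inj f_adj].
case/existsP=> g /and3P[/injectiveP g_inj /eqP gT /forallP g_adj].
have gX u : g u \in X by rewrite -gT imset_f ?inE.
have fgn u : f (g u) < n by case/memnP: (fXY _ (gX u)) => y _ <-.
apply/existsP; exists [ffun u => Ordinal (fgn u)]; apply/and3P; split.
- apply/injectiveP => u v; rewrite !ffunE => /(congr1 val) /= /f_inj.
  by move=> /(_ (gX u) (gX v)) /g_inj.
- apply/eqP/setP => y; apply/imsetP/idP => [[u _ ->]|yY].
    rewrite ffunE; case/memnP: (fXY _ (gX u)) => z zY fz.
    by rewrite (_ : Ordinal _ = z) //; apply: val_inj.
  case: (fYX y yY) => x; rewrite -gT => /imsetP[u _ ->] fy.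
  by exists u; rewrite ?inE // ffunE; apply: val_inj.
- apply/forallP => u; apply/forallP => v; rewrite !ffunE /= f_adj ?gX //.
  by have /forallP := g_adj u; apply.
Qed.

Lemma iso_closed_induced n W : iso_closed W (fun X : {set 'I_n} => induced_iso X e).
Proof. by move=> X Y _ _; apply: induced_iso_path_iso. Qed.

Lemma card_induced_iso n (X : {set 'I_n}) : induced_iso X e -> #|X| = #|T|.
Proof.
case/existsP=> g /and3P[/injectiveP g_inj /eqP <- _].
by rewrite card_imset // cardsT.
Qed.

Lemma induced_iso_set1 n (x y : 'I_n) : induced_iso [set x] e -> induced_iso [set y] e.
Proof.
apply: induced_iso_path_iso; exists (fun _ => y : nat); split.
- by move=> z _; apply/memnP; exists y; rewrite ?inE.
- by move=> z /set1P ->; exists x; rewrite ?inE.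
- by move=> u v /set1P -> /set1P ->.
- by move=> u v /set1P -> /set1P ->; rewrite /path_adj; lia.
Qed.

Lemma s_prime_set1 n h (x : 'I_n) : #|T| <= 1 -> x = wv h :> nat ->
  s_prime n h e = induced_iso [set x] e.
Proof.
move=> T1 xh; rewrite /s_prime.
have onlyx (X : {set 'I_n}) :
    [exists y in X, val y == wv h] -> induced_iso X e -> X = [set x].
  case/exists_inP=> y yX /eqP yh XT; have -> : x = y by apply/val_inj; rewrite /= yh.
  by apply/eqP; rewrite eq_sym eqEcard sub1set yX cards1 (card_induced_iso XT) T1.
transitivity #|if induced_iso [set x] e then [set [set x]] else set0|; last first.
  by case: ifP; rewrite ?cards1 ?cards0.
apply: eq_card => X; rewrite inE; apply/and3P/idP => [[hX _ XT]|].
  by rewrite -(onlyx X hX XT) XT inE.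
case: ifP => [xe|_]; rewrite ?inE // => /eqP ->; split => //.
  by apply/exists_inP; exists x; rewrite ?inE //; apply/eqP.
by apply/forall_inP => z /set1P ->; rewrite /= xh /path_adj; lia.
Qed.

Lemma s_prime_card_le1 n h1 h2 : #|T| <= 1 -> 1 <= h1 <= n -> 1 <= h2 <= n ->
  s_prime n h1 e = s_prime n h2 e.
Proof.
move=> T1 h1n h2n; have x1n : wv h1 < n by rewrite /wv; lia.
have x2n : wv h2 < n by rewrite /wv; lia.
rewrite (s_prime_set1 (x := Ordinal x1n) T1 erefl).
rewrite (s_prime_set1 (x := Ordinal x2n) T1 erefl).
by congr nat_of_bool; apply/idP/idP; apply: induced_iso_set1.
Qed.

Lemma s_prime_count n h :
  s_prime n h e =
  count_sets (fun x => [&& x < n, x != (wv h).+1 & x.+1 != wv h])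
    (fun X : {set 'I_n} => induced_iso X e) (memn^~ (wv h)).
Proof.
apply: eq_card => X; rewrite !inE andbCA; congr (_ && _); last by rewrite andbC.
apply/forall_inP/withinP => adjX x /adjX /=; have := ltn_ord x; rewrite /path_adj; lia.
Qed.

Lemma s_prime_restrict n h : 2 <= h < n ->
  let Q := fun Z => induced_iso (Z :|: segment n n.-1 n) e in
  s_prime n h e =
  count_sets (fun x => x < n.-2) Q predT - count_sets (fun x => x < n.-2) Q (memn^~ h.-2).
Proof.
move=> hn Q; rewrite -count_sets_negb s_prime_count count_isolated_last;
  rewrite ?count_last_restrict /wv //; try lia.
exact: iso_closed_induced.
Qed.

End InducedSubgraphs.

Theorem lemma2p3 (T : finType) (e : rel T) (k n : nat) :
  symmetric e -> linear_forest e -> #|T| = k ->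
  forall h1 h2 : nat,
    1 <= h1 <= n -> 1 <= h2 <= n ->
    k <= h1 <= n - k + 1 -> k <= h2 <= n - k + 1 ->
    s_prime n h1 e = s_prime n h2 e.
Proof.
move=> _ _ Tk h1 h2 h1n h2n h1k h2k.
have [k_le1|k_gt1] := leqP k 1; first by apply: s_prime_card_le1; rewrite ?Tk.
pose Q Z := induced_iso (Z :|: segment n n.-1 n) e.
have Qiso : iso_closed (fun x => x < n.-2) Q.
  apply: (@iso_closed_setU n (fun x => x < n) n.-2 (fun X => induced_iso X e));
    last exact: iso_closed_induced.
  - by move=> x; lia.
  - by apply/withinP => y /[!inE]; lia.
  - by apply/withinP => y /[!inE]; lia.
have Qcard Z : within (fun x => x < n.-2) Z -> Q Z -> #|Z| = k.-1.
  move=> Zn /card_induced_iso; rewrite card_setU_segment //; last first.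
    by apply: sub_within Zn => x; lia.
  by rewrite Tk; lia.
rewrite !s_prime_restrict; try lia.
by congr (_ - _); apply: (count_mem_const _ Qiso Qcard); lia.
Qed.
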